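(* $A(1)=\int_0^\infty\left(\frac1x-\frac{1}{e^x-1}\right)^2dx=2C-\frac12.$
   Context: $A(v)=\int_0^\infty\left(\frac{1}{xv}-\frac{1}{e^{xv}-1}\right)\left(\frac1x-\frac{1}{e^x-1}\right)dx$ for $v>0$. $C=\frac{\log(2\pi)-\gamma}{2}$, with $\gamma$ the Euler–Mascheroni constant. *)

From Stdlib Require Import Reals.
From Coquelicot Require Import Coquelicot.
Open Scope R_scope.

Definition harmonic (n : nat) : R := sum_f_R0 (fun k => / INR (S k)) (pred n).
Definition euler_gamma : R :=
  real (Lim_seq (fun n => harmonic n - ln (INR n))).

Definition C_const : R := (ln (2 * PI) - euler_gamma) / 2.

Definition A_integrand (v x : R) : R :=
  (/ (x * v) - / (exp (x * v) - 1)) * (/ x - / (exp x - 1)).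

From Stdlib Require Import Reals Lra Lia Psatz.
From Coquelicot Require Import Coquelicot.
Open Scope R_scope.

(** With [y = e^{-x}] and [d(x) = 1 - (1 + x) e^{-x}] the integrand is
    [(1 - y)^{-2} d(x)^2 / x^2 = sum_k (k + 1) e^{-kx} d(x)^2 / x^2].  Each term has
    an explicit primitive, built from the exponential integral, which vanishes at
    [+oo] and has an explicit limit at [0+]; the tail of the series integrates to at
    most [2/(n+1)].  The sum of the integrals of the terms [k <= n] is
    [2 (ln n! - (n + 1/2) ln n + n) - (H_n - ln n) - 1/2 + o(1)], so Stirling's
    constant [ln (sqrt (2 pi))], obtained from Wallis' integrals, and Euler's
    constant give the value [ln (2 pi) - gamma - 1/2 = 2 C - 1/2]. *)


Lemma le_of_nonneg_derive (f df : R -> R) a b : a <= b ->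
  (forall x, a <= x <= b -> is_derive f x (df x)) ->
  (forall x, a <= x <= b -> 0 <= df x) -> f a <= f b.
Proof.
  intros Hab Hd Hp.
  assert (Hseg : forall x, Rmin a b <= x <= Rmax a b -> a <= x <= b).
  { rewrite Rmin_left, Rmax_right by lra. auto. }
  destruct (MVT_gen f a b df) as [c [Hc Heq]].
  - intros x Hx. apply Hd, Hseg. lra.
  - intros x Hx. apply continuity_pt_filterlim, (ex_derive_continuous (V := R_NormedModule)).
    exists (df x). apply Hd, Hseg, Hx.
  - assert (0 <= df c) by (apply Hp, Hseg; lra). nra.
Qed.

Lemma exp_le_compat a b : a <= b -> exp a <= exp b.
Proof. intros [H| ->]; [left; apply exp_increasing|]; lra. Qed.

Lemma exp_opp_le_1 t : 0 <= t -> exp (-t) <= 1.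
Proof. intros Ht. rewrite <- exp_0. apply exp_le_compat. lra. Qed.

Lemma one_sub_exp_opp_bounds t : 0 <= t -> 0 <= 1 - exp (-t) <= t.
Proof. intros Ht. generalize (exp_opp_le_1 t Ht) (exp_ineq1_le (-t)). lra. Qed.

Lemma succ_mul_exp_opp_le_1 x : (1 + x) * exp (-x) <= 1.
Proof.
  rewrite exp_Ropp. generalize (exp_ineq1_le x) (exp_pos x). intros H1 H2.
  apply (Rmult_le_reg_r (exp x)); auto. rewrite Rmult_assoc, Rinv_l by lra. lra.
Qed.

Lemma mul_exp_opp_le_1 x : 0 <= x -> x * exp (-x) <= 1.
Proof. generalize (succ_mul_exp_opp_le_1 x) (exp_pos (-x)). nra. Qed.

Lemma succ_mul_exp_opp_ge x : 0 <= x -> 1 - x ^ 2 / 2 <= (1 + x) * exp (-x).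
Proof.
  intros Hx.
  assert (H := le_of_nonneg_derive (fun t => (1 + t) * exp (-t) - 1 + t ^ 2 / 2)
                 (fun t => t * (1 - exp (-t))) 0 x Hx).
  cbv beta in H. rewrite Ropp_0, exp_0 in H.
  enough (0 <= (1 + x) * exp (-x) - 1 + x ^ 2 / 2) by lra.
  eapply Rle_trans; [|apply H].
  - lra.
  - intros t _. auto_derive; auto. field.
  - intros t Ht. apply Rmult_le_pos; [lra|]. apply one_sub_exp_opp_bounds. lra.
Qed.

Lemma exp_mul_pred_ge x : 0 <= x -> -1 <= exp x * (x - 1).
Proof.
  intros Hx.
  assert (H := le_of_nonneg_derive (fun t => exp t * (t - 1)) (fun t => t * exp t) 0 x Hx).
  cbv beta in H. rewrite exp_0 in H.
  eapply Rle_trans; [|apply H].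
  - lra.
  - intros t _. auto_derive; auto. ring.
  - intros t Ht. apply Rmult_le_pos; [lra|]. left; apply exp_pos.
Qed.

Lemma ln_1p_le x : -1 < x -> ln (1 + x) <= x.
Proof. intros Hx. rewrite <- (ln_exp x) at 2. apply ln_le; [lra|]. apply exp_ineq1_le. Qed.

Lemma ln_1p_ge x : 0 <= x -> x - x ^ 2 / 2 <= ln (1 + x).
Proof.
  intros Hx.
  assert (H := le_of_nonneg_derive (fun t => ln (1 + t) - t + t ^ 2 / 2)
                 (fun t => t ^ 2 / (1 + t)) 0 x Hx).
  cbv beta in H. rewrite Rplus_0_r, ln_1 in H.
  enough (0 <= ln (1 + x) - x + x ^ 2 / 2) by lra.
  eapply Rle_trans; [|apply H].
  - lra.
  - intros t Ht. auto_derive; [lra|]. field. lra.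
  - intros t Ht. apply Rdiv_le_0_compat; nra.
Qed.

Lemma ln_1p_le_cubic x : 0 <= x -> ln (1 + x) <= x - x ^ 2 / 2 + x ^ 3 / 3.
Proof.
  intros Hx.
  assert (H := le_of_nonneg_derive (fun t => t - t ^ 2 / 2 + t ^ 3 / 3 - ln (1 + t))
                 (fun t => t ^ 3 / (1 + t)) 0 x Hx).
  cbv beta in H. rewrite Rplus_0_r, ln_1 in H.
  enough (0 <= x - x ^ 2 / 2 + x ^ 3 / 3 - ln (1 + x)) by lra.
  eapply Rle_trans; [|apply H].
  - lra.
  - intros t Ht. auto_derive; [lra|]. field. lra.
  - intros t Ht. apply Rdiv_le_0_compat; [apply pow_le|]; lra.
Qed.

Lemma ln_succ_sub_bounds m : 0 < m -> / (m + 1) <= ln (m + 1) - ln m <= / m.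
Proof.
  intros Hm. split.
  - assert (H := ln_1p_le (- / (m + 1))).
    replace (1 + - / (m + 1)) with (m / (m + 1)) in H by (field; lra).
    rewrite ln_div in H by lra.
    enough (/ (m + 1) < 1) by (specialize (H ltac:(lra)); lra).
    apply (Rmult_lt_reg_r (m + 1)); [lra|]. rewrite Rinv_l by lra. lra.
  - assert (H := ln_1p_le (/ m)).
    replace (1 + / m) with ((m + 1) / m) in H by (field; lra).
    rewrite ln_div in H by lra.
    apply H. assert (0 < / m) by (apply Rinv_0_lt_compat; lra). lra.
Qed.

(** * The exponential integral *)

Lemma continuous_of_ex_derive (f : R -> R) x : ex_derive f x -> continuous f x.
Proof. apply (ex_derive_continuous (V := R_NormedModule)). Qed.

Lemma is_RInt_const_div_id c a b : 0 < a -> 0 < b ->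
  is_RInt (fun u => c / u) a b (c * (ln b - ln a)).
Proof.
  intros Ha Hb.
  assert (Hseg : forall x, Rmin a b <= x <= Rmax a b -> 0 < x).
  { intros x Hx. assert (0 < Rmin a b) by (apply Rmin_glb_lt; auto). lra. }
  replace (c * (ln b - ln a)) with (minus (c * ln b) (c * ln a))
    by (change (c * ln b - c * ln a = c * (ln b - ln a)); ring).
  apply (is_RInt_derive (V := R_CompleteNormedModule) (fun u => c * ln u)).
  - intros x Hx. specialize (Hseg x Hx). auto_derive; [lra|]. field. lra.
  - intros x Hx. specialize (Hseg x Hx). apply continuous_of_ex_derive. auto_derive. lra.
Qed.

Definition expint (y : R) : R := RInt (fun u => exp (-u) / u) 1 y.

Lemma ex_RInt_expint_integrand a b : 0 < a -> 0 < b -> ex_RInt (fun u => exp (-u) / u) a b.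
Proof.
  intros Ha Hb. apply (ex_RInt_continuous (V := R_CompleteNormedModule)). intros z Hz.
  assert (0 < Rmin a b) by (apply Rmin_glb_lt; auto).
  apply continuous_of_ex_derive. auto_derive. lra.
Qed.

Lemma expint_sub a b : 0 < a -> 0 < b -> expint b - expint a = RInt (fun u => exp (-u) / u) a b.
Proof.
  intros Ha Hb. unfold expint.
  rewrite <- (RInt_Chasles _ 1 a b); try apply ex_RInt_expint_integrand; try lra.
  change (RInt (fun u => exp (-u) / u) 1 a + RInt (fun u => exp (-u) / u) a b
          - RInt (fun u => exp (-u) / u) 1 a = RInt (fun u => exp (-u) / u) a b). ring.
Qed.

Lemma is_derive_expint y : 0 < y -> is_derive expint y (exp (-y) / y).
Proof.
  intros Hy. apply (is_derive_RInt (fun u => exp (-u) / u)) with 1.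
  - exists (mkposreal (y / 2) ltac:(lra)). intros b Hb.
    change (Rabs (b - y) < y / 2) in Hb. apply Rabs_lt_between in Hb.
    apply (RInt_correct (V := R_CompleteNormedModule)). apply ex_RInt_expint_integrand; lra.
  - apply continuous_of_ex_derive. auto_derive. lra.
Qed.

Lemma is_derive_expint_scale c x : 0 < c -> 0 < x ->
  is_derive (fun t => expint (c * t)) x (exp (-(c * x)) / x).
Proof.
  intros Hc Hx.
  replace (exp (-(c * x)) / x) with (scal c (exp (-(c * x)) / (c * x)))
    by (change (c * (exp (-(c * x)) / (c * x)) = exp (-(c * x)) / x); field; lra).
  apply (is_derive_comp expint (fun t => c * t)).
  - apply is_derive_expint. nra.
  - auto_derive; auto. ring.
Qed.

(** [expint (b x) - expint (a x) = int_{ax}^{bx} e^{-u} du/u] lies between the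
    values of [e^{-u}] at the two ends, times [int du/u = ln (b/a)]. *)
Lemma expint_scale_sub_bounds a b x : 0 < a -> a <= b -> 0 < x ->
  exp (-(b * x)) * (ln b - ln a) <= expint (b * x) - expint (a * x)
  <= exp (-(a * x)) * (ln b - ln a).
Proof.
  intros Ha Hab Hx.
  assert (Hax : 0 < a * x) by nra. assert (Hbx : 0 < b * x) by nra.
  assert (Hle : a * x <= b * x) by nra.
  rewrite expint_sub by auto.
  assert (HI := RInt_correct (V := R_CompleteNormedModule) _ _ _
                  (ex_RInt_expint_integrand _ _ Hax Hbx)).
  assert (Hl : ln (b * x) - ln (a * x) = ln b - ln a) by (rewrite !ln_mult by lra; ring).
  assert (Hinv : forall u, a * x <= u <= b * x -> 0 <= / u)
    by (intros u Hu; left; apply Rinv_0_lt_compat; lra).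
  split.
  - assert (H := is_RInt_const_div_id (exp (-(b * x))) _ _ Hax Hbx). rewrite Hl in H.
    apply (is_RInt_le _ _ _ _ _ _ Hle H HI). intros u Hu.
    apply Rmult_le_compat_r; [apply Hinv; lra|]. apply exp_le_compat. lra.
  - assert (H := is_RInt_const_div_id (exp (-(a * x))) _ _ Hax Hbx). rewrite Hl in H.
    apply (is_RInt_le _ _ _ _ _ _ Hle HI H). intros u Hu.
    apply Rmult_le_compat_r; [apply Hinv; lra|]. apply exp_le_compat. lra.
Qed.

(** * Expansion of the integrand *)

Lemma A_integrand_1 x : A_integrand 1 x = (/ x - / (exp x - 1)) ^ 2.
Proof. unfold A_integrand. rewrite Rmult_1_r. ring. Qed.

Lemma A_integrand_1_bounds x : 0 < x -> 0 <= A_integrand 1 x <= 1.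
Proof.
  intros Hx. rewrite A_integrand_1.
  assert (H1 : x < exp x - 1) by (generalize (exp_ineq1 x ltac:(lra)); lra).
  assert (Hlo : / (exp x - 1) <= / x) by (apply Rinv_le_contravar; lra).
  assert (Hhi : / x - / (exp x - 1) <= 1).
  { assert (H2 := exp_mul_pred_ge x ltac:(lra)).
    replace (/ x - / (exp x - 1)) with (1 - (exp x * (x - 1) + 1) / (x * (exp x - 1)))
      by (field; lra).
    enough (0 <= (exp x * (x - 1) + 1) / (x * (exp x - 1))) by lra.
    apply Rdiv_le_0_compat; nra. }
  split; [apply pow_le; lra|].
  apply Rle_trans with (1 ^ 2); [apply pow_incr; split|simpl]; lra.
Qed.

Lemma continuous_A_integrand_1 x : 0 < x -> continuous (A_integrand 1) x.
Proof.
  intros Hx. apply continuous_of_ex_derive. unfold A_integrand.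
  assert (x < exp x - 1) by (generalize (exp_ineq1 x ltac:(lra)); lra).
  auto_derive. rewrite Rmult_1_r. repeat split; lra.
Qed.

Definition exp_defect (x : R) : R := 1 - exp (-x) * (1 + x).

Lemma exp_defect_bounds x : 0 <= x -> 0 <= exp_defect x <= x ^ 2 / 2 /\ exp_defect x <= 1.
Proof.
  intros Hx. unfold exp_defect.
  generalize (succ_mul_exp_opp_ge x Hx) (succ_mul_exp_opp_le_1 x) (exp_pos (-x)). nra.
Qed.

Definition defect_sq (k x : R) : R := exp (-(k * x)) * exp_defect x ^ 2.
Definition A1_term (k x : R) : R := defect_sq k x / x ^ 2.
Definition A1_partial (n : nat) (x : R) : R :=
  sum_f_R0 (fun k => (INR k + 1) * A1_term (INR k) x) n.

Lemma defect_sq_bounds k x : 0 <= k -> 0 <= x ->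
  0 <= defect_sq k x <= x ^ 4 / 4 /\ defect_sq k x <= 1.
Proof.
  intros Hk Hx. unfold defect_sq. destruct (exp_defect_bounds x Hx) as [[H1 H2] H3].
  assert (He : exp (-(k * x)) <= 1) by (apply exp_opp_le_1; nra).
  assert (He0 := exp_pos (-(k * x))).
  assert (Hs : exp_defect x ^ 2 <= (x ^ 2 / 2) ^ 2) by (apply pow_incr; auto).
  assert (Hs1 : exp_defect x ^ 2 <= 1)
    by (apply Rle_trans with (1 ^ 2); [apply pow_incr|simpl]; lra).
  assert (Hs0 : 0 <= exp_defect x ^ 2) by (apply pow_le; auto).
  replace (x ^ 4 / 4) with ((x ^ 2 / 2) ^ 2) by field.
  split; [split|]; nra.
Qed.

Lemma exp_opp_INR_mul k x : exp (-(INR k * x)) = exp (-x) ^ k.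
Proof.
  induction k as [|k IH]; simpl pow.
  - rewrite Rmult_0_l, Ropp_0, exp_0. reflexivity.
  - rewrite <- IH, <- exp_plus, S_INR. f_equal. ring.
Qed.

Lemma A1_term_INR k x : 0 < x ->
  A1_term (INR k) x = exp (-x) ^ k * (A_integrand 1 x * (1 - exp (-x)) ^ 2).
Proof.
  intros Hx. unfold A1_term, defect_sq, exp_defect.
  rewrite A_integrand_1, exp_opp_INR_mul, exp_Ropp.
  assert (1 < exp x) by (generalize (exp_ineq1 x ltac:(lra)); lra).
  field. split; lra.
Qed.

Lemma sum_succ_mul_pow_mul_sq y n :
  sum_f_R0 (fun k => (INR k + 1) * y ^ k) n * (1 - y) ^ 2
  = 1 - (INR n + 2) * y ^ S n + (INR n + 1) * y ^ S (S n).
Proof.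
  induction n as [|n IH].
  - simpl. ring.
  - rewrite tech5, Rmult_plus_distr_r, IH, !S_INR. simpl. ring.
Qed.

(** [A_integrand 1 x = (1 - y)^{-2} d(x)^2 / x^2] with [y = e^{-x}]; truncating
    [(1 - y)^{-2} = sum (k + 1) y^k] gives the partial sums. *)
Lemma A1_partial_eq n x : 0 < x ->
  A1_partial n x = A_integrand 1 x
    * (1 - (INR n + 2) * exp (-x) ^ S n + (INR n + 1) * exp (-x) ^ S (S n)).
Proof.
  intros Hx. unfold A1_partial.
  rewrite (sum_eq _ (fun k => (INR k + 1) * exp (-x) ^ k
                             * (A_integrand 1 x * (1 - exp (-x)) ^ 2)))
    by (intros k _; rewrite A1_term_INR by auto; ring).
  rewrite <- scal_sum, <- sum_succ_mul_pow_mul_sq. ring.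
Qed.

Lemma A1_partial_bounds n x : 0 < x ->
  A1_partial n x <= A_integrand 1 x
  <= A1_partial n x + exp (-((INR n + 1) * x)) * (1 + (INR n + 1) * x).
Proof.
  intros Hx. rewrite A1_partial_eq by auto.
  destruct (A_integrand_1_bounds x Hx) as [F0 F1].
  rewrite <- S_INR, exp_opp_INR_mul, S_INR. simpl pow.
  assert (Hy0 := exp_pos (-x)). assert (Hy1 := exp_opp_le_1 x ltac:(lra)).
  assert (Hyx : 1 - exp (-x) <= x) by apply (one_sub_exp_opp_bounds x ltac:(lra)).
  set (y := exp (-x)) in *. set (z := y ^ n).
  assert (Hz : 0 <= z) by (apply pow_le; lra).
  assert (HN := pos_INR n).
  assert (Hyz : 0 <= y * z) by nra.
  assert (Hk : 0 <= (INR n + 2) - (INR n + 1) * y) by nra.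
  assert (Hk2 : (INR n + 2) - (INR n + 1) * y <= 1 + (INR n + 1) * x) by nra.
  replace (A_integrand 1 x * (1 - (INR n + 2) * (y * z) + (INR n + 1) * (y * (y * z))))
    with (A_integrand 1 x - A_integrand 1 x * (y * z) * ((INR n + 2) - (INR n + 1) * y))
    by ring.
  assert (0 <= A_integrand 1 x * (y * z) * ((INR n + 2) - (INR n + 1) * y))
    by (apply Rmult_le_pos; [apply Rmult_le_pos|]; auto).
  assert (A_integrand 1 x * (y * z) * ((INR n + 2) - (INR n + 1) * y)
          <= 1 * (y * z) * (1 + (INR n + 1) * x))
    by (apply Rmult_le_compat; auto; [apply Rmult_le_pos; auto | apply Rmult_le_compat_r; auto]).
  lra.
Qed.

(** * Primitives of the terms *)

Definition expint_diff2 (k x : R) : R :=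
  (expint ((k + 1) * x) - expint (k * x)) - (expint ((k + 2) * x) - expint ((k + 1) * x)).
Definition exp_part (k x : R) : R :=
  -2 * exp (-((k + 1) * x)) + ((2 * k + 3) / (k + 2) + x) * exp (-((k + 2) * x)).
Definition A1_prim (k x : R) : R := - defect_sq k x / x + exp_part k x + k * expint_diff2 k x.

Lemma is_derive_scaled_expint_diff2 k x : 0 <= k -> 0 < x ->
  is_derive (fun t => k * expint_diff2 k t) x
    (k * (2 * exp (-((k + 1) * x)) - exp (-(k * x)) - exp (-((k + 2) * x))) / x).
Proof.
  intros Hk Hx. destruct (Req_dec k 0) as [-> | Hk0].
  - apply (is_derive_ext (fun _ => 0)); [intros t; rewrite Rmult_0_l; reflexivity|].
    replace (0 * _ / x) with 0 by (field; lra).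
    exact (is_derive_const (K := R_AbsRing) (V := R_NormedModule) 0 x).
  - replace (k * _ / x) with (scal k
      (minus (minus (exp (-((k + 1) * x)) / x) (exp (-(k * x)) / x))
             (minus (exp (-((k + 2) * x)) / x) (exp (-((k + 1) * x)) / x))))
      by (unfold scal, minus, plus, opp; simpl; unfold mult; simpl; field; lra).
    assert (H0 := is_derive_expint_scale k x ltac:(lra) Hx).
    assert (H1 := is_derive_expint_scale (k + 1) x ltac:(lra) Hx).
    assert (H2 := is_derive_expint_scale (k + 2) x ltac:(lra) Hx).
    exact (is_derive_scal _ _ k _ (is_derive_minus _ _ _ _ _
             (is_derive_minus _ _ _ _ _ H1 H0) (is_derive_minus _ _ _ _ _ H2 H1))).
Qed.

Lemma is_derive_A1_prim k x : 0 <= k -> 0 < x -> is_derive (A1_prim k) x (A1_term k x).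
Proof.
  intros Hk Hx.
  assert (Hrest : is_derive (fun t => - defect_sq k t / t + exp_part k t) x
    (A1_term k x - k * (2 * exp (-((k + 1) * x)) - exp (-(k * x)) - exp (-((k + 2) * x))) / x)).
  { unfold A1_term, defect_sq, exp_defect, exp_part. auto_derive; [lra|].
    replace (exp (-((k + 1) * x))) with (exp (-(k * x)) * exp (-x))
      by (rewrite <- exp_plus; f_equal; ring).
    replace (exp (-((k + 2) * x))) with (exp (-(k * x)) * exp (-x) ^ 2)
      by (simpl; rewrite Rmult_1_r, <- !exp_plus; f_equal; ring).
    simpl. field. lra. }
  replace (A1_term k x) with (plus
    (A1_term k x - k * (2 * exp (-((k + 1) * x)) - exp (-(k * x)) - exp (-((k + 2) * x))) / x)
    (k * (2 * exp (-((k + 1) * x)) - exp (-(k * x)) - exp (-((k + 2) * x))) / x))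
    by (unfold plus; simpl; field; lra).
  apply (is_derive_plus _ _ _ _ _ Hrest (is_derive_scaled_expint_diff2 k x Hk Hx)).
Qed.

(** * Rates at [0+] and [+oo] *)

(** Explicit rates make the passage to the improper integral elementary. *)
Definition lin_conv_at_0 (g : R -> R) (c : R) : Prop :=
  exists N, forall x, 0 < x <= 1 -> Rabs (g x - c) <= N * x.
Definition inv_decay (g : R -> R) : Prop :=
  exists M, forall x, 1 <= x -> Rabs (g x) <= M / x.

Lemma lin_conv_at_0_ext f g c : (forall x, 0 < x -> f x = g x) ->
  lin_conv_at_0 f c -> lin_conv_at_0 g c.
Proof. intros He [N H]. exists N. intros x Hx. rewrite <- He by lra. auto. Qed.

Lemma lin_conv_at_0_plus f g cf cg : lin_conv_at_0 f cf -> lin_conv_at_0 g cg ->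
  lin_conv_at_0 (fun x => f x + g x) (cf + cg).
Proof.
  intros [N1 H1] [N2 H2]. exists (N1 + N2). intros x Hx.
  specialize (H1 x Hx). specialize (H2 x Hx).
  replace (f x + g x - (cf + cg)) with ((f x - cf) + (g x - cg)) by ring.
  eapply Rle_trans; [apply Rabs_triang | lra].
Qed.

Lemma lin_conv_at_0_scal f c a : lin_conv_at_0 f c -> lin_conv_at_0 (fun x => a * f x) (a * c).
Proof.
  intros [N H]. exists (Rabs a * N). intros x Hx.
  replace (a * f x - a * c) with (a * (f x - c)) by ring.
  rewrite Rabs_mult, Rmult_assoc. apply Rmult_le_compat_l; [apply Rabs_pos | auto].
Qed.

Lemma lin_conv_at_0_sum (f : nat -> R -> R) (c : nat -> R) n :
  (forall k, lin_conv_at_0 (f k) (c k)) ->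
  lin_conv_at_0 (fun x => sum_f_R0 (fun k => f k x) n) (sum_f_R0 c n).
Proof. intros H. induction n; simpl; [apply H | apply lin_conv_at_0_plus; auto]. Qed.

Lemma inv_decay_ext f g : (forall x, 0 < x -> f x = g x) -> inv_decay f -> inv_decay g.
Proof. intros He [M H]. exists M. intros x Hx. rewrite <- He by lra. auto. Qed.

Lemma inv_decay_plus f g : inv_decay f -> inv_decay g -> inv_decay (fun x => f x + g x).
Proof.
  intros [M1 H1] [M2 H2]. exists (M1 + M2). intros x Hx.
  specialize (H1 x Hx). specialize (H2 x Hx).
  replace ((M1 + M2) / x) with (M1 / x + M2 / x) by (field; lra).
  eapply Rle_trans; [apply Rabs_triang | lra].
Qed.

Lemma inv_decay_scal f a : inv_decay f -> inv_decay (fun x => a * f x).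
Proof.
  intros [M H]. exists (Rabs a * M). intros x Hx. unfold Rdiv.
  rewrite Rabs_mult, Rmult_assoc. apply Rmult_le_compat_l; [apply Rabs_pos | apply H; auto].
Qed.

Lemma inv_decay_sum (f : nat -> R -> R) n :
  (forall k, inv_decay (f k)) -> inv_decay (fun x => sum_f_R0 (fun k => f k x) n).
Proof. intros H. induction n; simpl; [apply H | apply inv_decay_plus; auto]. Qed.

Lemma lin_conv_at_0_exp_opp_scale c : 0 <= c -> lin_conv_at_0 (fun x => exp (-(c * x))) 1.
Proof.
  intros Hc. exists c. intros x Hx. destruct (one_sub_exp_opp_bounds (c * x) ltac:(nra)).
  apply Rabs_le_between. split; nra.
Qed.

Lemma lin_conv_at_0_id_mul_exp_opp_scale c : 0 <= c ->
  lin_conv_at_0 (fun x => x * exp (-(c * x))) 0.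
Proof.
  intros Hc. exists 1. intros x Hx.
  assert (H := exp_opp_le_1 (c * x) ltac:(nra)). assert (H0 := exp_pos (-(c * x))).
  apply Rabs_le_between. split; nra.
Qed.

Lemma inv_decay_exp_opp_scale c : 1 <= c -> inv_decay (fun x => exp (-(c * x))).
Proof.
  intros Hc. exists 1. intros x Hx.
  assert (H1 := exp_le_compat (-(c * x)) (-x) ltac:(nra)).
  assert (H2 := mul_exp_opp_le_1 x ltac:(lra)). assert (H0 := exp_pos (-(c * x))).
  rewrite Rabs_pos_eq by lra. apply (Rmult_le_reg_r x); [lra|].
  unfold Rdiv. rewrite Rmult_assoc, Rinv_l by lra. nra.
Qed.

Lemma inv_decay_id_mul_exp_opp_scale c : 2 <= c -> inv_decay (fun x => x * exp (-(c * x))).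
Proof.
  intros Hc. exists 1. intros x Hx.
  assert (H1 := exp_le_compat (-(c * x)) (-x + -x) ltac:(nra)). rewrite exp_plus in H1.
  assert (H2 := mul_exp_opp_le_1 x ltac:(lra)).
  assert (H0 := exp_pos (-(c * x))). assert (H3 := exp_pos (-x)).
  rewrite Rabs_pos_eq by nra. apply (Rmult_le_reg_r x); [lra|].
  replace (1 / x * x) with 1 by (field; lra).
  assert (x * exp (-x) * (x * exp (-x)) <= 1 * 1) by (apply Rmult_le_compat; nra).
  assert (x * x * exp (-(c * x)) <= x * x * (exp (-x) * exp (-x)))
    by (apply Rmult_le_compat_l; nra).
  nra.
Qed.

Lemma lin_conv_at_0_defect_sq_div k : 0 <= k -> lin_conv_at_0 (fun x => - defect_sq k x / x) 0.
Proof.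
  intros Hk. exists (/ 4). intros x Hx.
  destruct (defect_sq_bounds k x Hk ltac:(lra)) as [[H1 H2] _].
  rewrite Rminus_0_r, Rabs_div by lra. rewrite Rabs_Ropp, !Rabs_pos_eq by lra.
  apply (Rmult_le_reg_r x); [lra|]. unfold Rdiv. rewrite Rmult_assoc, Rinv_l by lra.
  assert (x ^ 4 <= x ^ 2) by (replace (x ^ 4) with (x ^ 2 * x ^ 2) by ring;
                              assert (0 <= x ^ 2 <= 1) by (split; nra); nra).
  nra.
Qed.

Lemma inv_decay_defect_sq_div k : 0 <= k -> inv_decay (fun x => - defect_sq k x / x).
Proof.
  intros Hk. exists 1. intros x Hx. destruct (defect_sq_bounds k x Hk ltac:(lra)) as [[H1 _] H2].
  rewrite Rabs_div by lra. rewrite Rabs_Ropp, !Rabs_pos_eq by lra.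
  unfold Rdiv. apply Rmult_le_compat_r; [left; apply Rinv_0_lt_compat|]; lra.
Qed.

Lemma lin_conv_at_0_expint_scale_sub a b : 0 < a -> a <= b ->
  lin_conv_at_0 (fun x => expint (b * x) - expint (a * x)) (ln b - ln a).
Proof.
  intros Ha Hab. exists (b * (ln b - ln a)). intros x Hx.
  destruct (expint_scale_sub_bounds a b x Ha Hab ltac:(lra)) as [H1 H2].
  assert (HL : 0 <= ln b - ln a) by (generalize (ln_le a b Ha Hab); lra).
  assert (He : exp (-(a * x)) <= 1) by (apply exp_opp_le_1; nra).
  destruct (one_sub_exp_opp_bounds (b * x) ltac:(nra)).
  apply Rabs_le_between. split; nra.
Qed.

Lemma inv_decay_expint_scale_sub a b : 0 < a -> a <= b ->
  inv_decay (fun x => expint (b * x) - expint (a * x)).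
Proof.
  intros Ha Hab. exists ((ln b - ln a) / a). intros x Hx.
  destruct (expint_scale_sub_bounds a b x Ha Hab ltac:(lra)) as [H1 H2].
  assert (HL : 0 <= ln b - ln a) by (generalize (ln_le a b Ha Hab); lra).
  assert (He : exp (-(a * x)) <= / (a * x)).
  { apply (Rmult_le_reg_r (a * x)); [nra|]. rewrite Rinv_l by nra.
    generalize (mul_exp_opp_le_1 (a * x) ltac:(nra)). lra. }
  assert (He0 := exp_pos (-(b * x))).
  replace ((ln b - ln a) / a / x) with ((ln b - ln a) * / (a * x)) by (field; lra).
  assert (exp (-(a * x)) * (ln b - ln a) <= / (a * x) * (ln b - ln a))
    by (apply Rmult_le_compat_r; auto).
  apply Rabs_le_between. split; nra.
Qed.

Lemma lin_conv_at_0_exp_part k : 0 <= k -> lin_conv_at_0 (exp_part k) (- / (k + 2)).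
Proof.
  intros Hk.
  replace (- / (k + 2)) with (-2 * 1 + (2 * k + 3) / (k + 2) * 1 + 0) by (field; lra).
  apply (lin_conv_at_0_ext (fun x => -2 * exp (-((k + 1) * x))
    + (2 * k + 3) / (k + 2) * exp (-((k + 2) * x)) + x * exp (-((k + 2) * x)))).
  { intros x _. unfold exp_part. ring. }
  repeat apply lin_conv_at_0_plus; try apply lin_conv_at_0_scal.
  - apply lin_conv_at_0_exp_opp_scale. lra.
  - apply lin_conv_at_0_exp_opp_scale. lra.
  - apply lin_conv_at_0_id_mul_exp_opp_scale. lra.
Qed.

Lemma inv_decay_exp_part k : 0 <= k -> inv_decay (exp_part k).
Proof.
  intros Hk.
  apply (inv_decay_ext (fun x => -2 * exp (-((k + 1) * x))
    + (2 * k + 3) / (k + 2) * exp (-((k + 2) * x)) + x * exp (-((k + 2) * x)))).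
  { intros x _. unfold exp_part. ring. }
  repeat apply inv_decay_plus; try apply inv_decay_scal.
  - apply inv_decay_exp_opp_scale. lra.
  - apply inv_decay_exp_opp_scale. lra.
  - apply inv_decay_id_mul_exp_opp_scale. lra.
Qed.

Lemma lin_conv_at_0_scaled_expint_diff2 k : 0 <= k ->
  lin_conv_at_0 (fun x => k * expint_diff2 k x) (k * (2 * ln (k + 1) - ln k - ln (k + 2))).
Proof.
  intros Hk. destruct (Req_dec k 0) as [-> | Hk0].
  - exists 0. intros x _. rewrite !Rmult_0_l, Rminus_0_r, Rabs_R0. lra.
  - apply lin_conv_at_0_scal.
    replace (2 * ln (k + 1) - ln k - ln (k + 2))
      with ((ln (k + 1) - ln k) + -1 * (ln (k + 2) - ln (k + 1))) by ring.
    apply (lin_conv_at_0_ext (fun x => (expint ((k + 1) * x) - expint (k * x))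
                              + -1 * (expint ((k + 2) * x) - expint ((k + 1) * x)))).
    { intros x _. unfold expint_diff2. ring. }
    apply lin_conv_at_0_plus; [|apply lin_conv_at_0_scal];
      apply lin_conv_at_0_expint_scale_sub; lra.
Qed.

Lemma inv_decay_scaled_expint_diff2 k : 0 <= k -> inv_decay (fun x => k * expint_diff2 k x).
Proof.
  intros Hk. destruct (Req_dec k 0) as [-> | Hk0].
  - exists 0. intros x _. rewrite Rmult_0_l, Rabs_R0. unfold Rdiv. lra.
  - apply inv_decay_scal.
    apply (inv_decay_ext (fun x => (expint ((k + 1) * x) - expint (k * x))
                          + -1 * (expint ((k + 2) * x) - expint ((k + 1) * x)))).
    { intros x _. unfold expint_diff2. ring. }
    apply inv_decay_plus; [|apply inv_decay_scal]; apply inv_decay_expint_scale_sub; lra.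
Qed.

Definition A1_prim_lim0 (k : R) : R := k * (2 * ln (k + 1) - ln k - ln (k + 2)) - / (k + 2).

Lemma lin_conv_at_0_A1_prim k : 0 <= k -> lin_conv_at_0 (A1_prim k) (A1_prim_lim0 k).
Proof.
  intros Hk. unfold A1_prim_lim0.
  replace (k * _ - / (k + 2)) with (0 + - / (k + 2) + k * (2 * ln (k + 1) - ln k - ln (k + 2)))
    by ring.
  apply lin_conv_at_0_plus; [apply lin_conv_at_0_plus|].
  - apply lin_conv_at_0_defect_sq_div. auto.
  - apply lin_conv_at_0_exp_part. auto.
  - apply lin_conv_at_0_scaled_expint_diff2. auto.
Qed.

Lemma inv_decay_A1_prim k : 0 <= k -> inv_decay (A1_prim k).
Proof.
  intros Hk. apply inv_decay_plus; [apply inv_decay_plus|].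
  - apply inv_decay_defect_sq_div. auto.
  - apply inv_decay_exp_part. auto.
  - apply inv_decay_scaled_expint_diff2. auto.
Qed.

Definition A1_partial_prim (n : nat) (x : R) : R :=
  sum_f_R0 (fun k => (INR k + 1) * A1_prim (INR k) x) n.

Lemma is_derive_A1_partial_prim n x : 0 < x -> is_derive (A1_partial_prim n) x (A1_partial n x).
Proof.
  intros Hx. unfold A1_partial_prim, A1_partial. induction n as [|n IH]; cbn [sum_f_R0].
  - apply (is_derive_scal (A1_prim (INR 0))). apply is_derive_A1_prim; [apply pos_INR | auto].
  - apply (is_derive_plus (fun y => sum_f_R0 (fun k => (INR k + 1) * A1_prim (INR k) y) n)
             (fun y => (INR (S n) + 1) * A1_prim (INR (S n)) y)); [auto|].
    apply (is_derive_scal (A1_prim (INR (S n)))). apply is_derive_A1_prim; [apply pos_INR | auto].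
Qed.

Lemma continuous_A1_partial n x : 0 < x -> continuous (A1_partial n) x.
Proof.
  intros Hx. apply continuous_of_ex_derive. unfold A1_partial.
  assert (Hterm : forall k, ex_derive (A1_term k) x).
  { intros k. unfold A1_term, defect_sq, exp_defect. auto_derive. nra. }
  induction n as [|n IH]; cbn [sum_f_R0].
  - apply ex_derive_scal, Hterm.
  - apply (ex_derive_plus (fun y => sum_f_R0 (fun k => (INR k + 1) * A1_term (INR k) y) n)
             (fun y => (INR (S n) + 1) * A1_term (INR (S n)) y)); [auto|].
    apply ex_derive_scal, Hterm.
Qed.

Lemma ex_RInt_A_integrand_1 a b : 0 < a -> 0 < b -> ex_RInt (A_integrand 1) a b.
Proof.
  intros Ha Hb. apply (ex_RInt_continuous (V := R_CompleteNormedModule)). intros x Hx.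
  apply continuous_A_integrand_1. assert (0 < Rmin a b) by (apply Rmin_glb_lt; auto). lra.
Qed.

Lemma is_RInt_exp_tail m a b : 0 < m ->
  is_RInt (fun x => exp (-(m * x)) * (1 + m * x)) a b
    ((exp (-(m * a)) * (2 + m * a) - exp (-(m * b)) * (2 + m * b)) / m).
Proof.
  intros Hm.
  replace ((exp (-(m * a)) * (2 + m * a) - exp (-(m * b)) * (2 + m * b)) / m) with
    (minus (- exp (-(m * b)) * (2 + m * b) / m) (- exp (-(m * a)) * (2 + m * a) / m))
    by (change (- exp (-(m * b)) * (2 + m * b) / m - - exp (-(m * a)) * (2 + m * a) / m
                = (exp (-(m * a)) * (2 + m * a) - exp (-(m * b)) * (2 + m * b)) / m);
        field; lra).
  apply (is_RInt_derive (V := R_CompleteNormedModule)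
           (fun x => - exp (-(m * x)) * (2 + m * x) / m)).
  - intros x _. auto_derive; [lra|]. field. lra.
  - intros x _. apply continuous_of_ex_derive. auto_derive. auto.
Qed.

Lemma exp_tail_le m a : 0 < m -> 0 <= a -> exp (-(m * a)) * (2 + m * a) <= 2.
Proof.
  intros Hm Ha. generalize (succ_mul_exp_opp_le_1 (m * a)) (exp_opp_le_1 (m * a) ltac:(nra)).
  lra.
Qed.

Lemma RInt_A_integrand_1_bounds n a b : 0 < a -> a <= b ->
  A1_partial_prim n b - A1_partial_prim n a <= RInt (A_integrand 1) a b
  <= A1_partial_prim n b - A1_partial_prim n a + 2 / (INR n + 1).
Proof.
  intros Ha Hab. assert (HN := pos_INR n).
  assert (Hseg : forall x, Rmin a b <= x <= Rmax a b -> 0 < x)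
    by (intros x Hx; rewrite Rmin_left in Hx by lra; lra).
  assert (HP : is_RInt (A1_partial n) a b (A1_partial_prim n b - A1_partial_prim n a)).
  { apply (is_RInt_derive (V := R_CompleteNormedModule) (A1_partial_prim n)).
    - intros x Hx. apply is_derive_A1_partial_prim, Hseg, Hx.
    - intros x Hx. apply continuous_A1_partial, Hseg, Hx. }
  assert (HF := RInt_correct _ _ _ (ex_RInt_A_integrand_1 a b Ha ltac:(lra))).
  assert (HS := is_RInt_plus _ _ _ _ _ _ HP (is_RInt_exp_tail (INR n + 1) a b ltac:(lra))).
  split.
  - apply (is_RInt_le _ _ _ _ _ _ Hab HP HF). intros x Hx. apply A1_partial_bounds. lra.
  - eapply Rle_trans; [apply (is_RInt_le _ _ _ _ _ _ Hab HF HS) |].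
    + intros x Hx. apply A1_partial_bounds. lra.
    + change (plus ?u ?v) with (u + v).
      assert (exp (-((INR n + 1) * a)) * (2 + (INR n + 1) * a) <= 2)
        by (apply exp_tail_le; lra).
      assert (0 < exp (-((INR n + 1) * b)) * (2 + (INR n + 1) * b))
        by (apply Rmult_lt_0_compat; [apply exp_pos | nra]).
      apply Rplus_le_compat_l. unfold Rdiv. apply Rmult_le_compat_r.
      * left; apply Rinv_0_lt_compat; lra.
      * lra.
Qed.

Lemma eventually_div_INR_lt c e : 0 < e ->
  exists N : nat, (1 <= N)%nat /\ forall n, (N <= n)%nat -> c / INR n < e.
Proof.
  intros He. assert (Hc := Rabs_pos c).
  destruct (archimed_cor1 (e / (Rabs c + 1))) as [N [HN HN0]].
  { apply Rdiv_lt_0_compat; lra. }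
  exists N. split; [lia|]. intros n Hn.
  assert (HN1 : 0 < INR N) by (apply lt_0_INR; lia).
  assert (Hle : INR N <= INR n) by (apply le_INR; auto).
  assert (Hinv : / INR n <= / INR N) by (apply Rinv_le_contravar; lra).
  assert (Hpos : 0 < / INR n) by (apply Rinv_0_lt_compat; lra).
  apply Rle_lt_trans with ((Rabs c + 1) * / INR N).
  - unfold Rdiv. apply Rle_trans with (Rabs c * / INR n).
    + apply Rmult_le_compat_r; [lra | apply Rle_abs].
    + apply Rmult_le_compat; lra.
  - apply (Rmult_lt_reg_l (/ (Rabs c + 1))); [apply Rinv_0_lt_compat; lra|].
    rewrite <- Rmult_assoc, Rinv_l, Rmult_1_l by lra. unfold Rdiv in HN. lra.
Qed.

Lemma is_lim_seq_of_rate (u : nat -> R) (l c : R) :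
  (forall n, (1 <= n)%nat -> Rabs (u n - l) <= c / INR n) -> is_lim_seq u l.
Proof.
  intros H. apply is_lim_seq_spec. intros [e He].
  destruct (eventually_div_INR_lt c e He) as [N [HN1 HN]]. exists N. intros n Hn. simpl.
  eapply Rle_lt_trans; [apply H; lia | apply HN; auto].
Qed.

Lemma is_lim_seq_of_cauchy_rate (u : nat -> R) (c : R) :
  (forall n m, (1 <= n)%nat -> (n <= m)%nat -> Rabs (u n - u m) <= c / INR n) ->
  exists l : R, is_lim_seq u l /\ forall n, (1 <= n)%nat -> Rabs (u n - l) <= c / INR n.
Proof.
  intros H.
  destruct (proj2 (ex_lim_seq_cauchy_corr u)) as [l Hl].
  { intros [e He]. destruct (eventually_div_INR_lt c e He) as [N [HN1 HN]].
    exists N. intros n m Hn Hm. simpl.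
    destruct (Nat.le_ge_cases n m).
    - eapply Rle_lt_trans; [apply H; lia | apply HN; auto].
    - rewrite Rabs_minus_sym. eapply Rle_lt_trans; [apply H; lia | apply HN; auto]. }
  exists l. split; [exact Hl|]. intros n Hn.
  assert (Hd : is_lim_seq (fun m => Rabs (u n - u m)) (Rabs (u n - l))).
  { apply (is_lim_seq_abs _ (u n - l)).
    apply (is_lim_seq_minus' _ _ _ _ (is_lim_seq_const (u n)) Hl). }
  apply (is_lim_seq_le_loc _ _ _ _ (ex_intro _ n (fun m Hm => H n m Hn Hm))
           Hd (is_lim_seq_const _)).
Qed.

Lemma sub_close_of_rates g c eps : lin_conv_at_0 g c -> inv_decay g -> 0 < eps ->
  exists d M, 0 < d <= 1 /\ 1 <= M /\
    forall a b, 0 < a < d -> M < b -> Rabs (g b - g a + c) < eps.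
Proof.
  intros [N HN] [K HK] He.
  assert (HN0 := Rabs_pos N). assert (HK0 := Rabs_pos K).
  exists (Rmin 1 (eps / (2 * (Rabs N + 1)))), (Rmax 1 (2 * (Rabs K + 1) / eps)).
  assert (Hd1 := Rmin_l 1 (eps / (2 * (Rabs N + 1)))).
  assert (Hd2 := Rmin_r 1 (eps / (2 * (Rabs N + 1)))).
  assert (HM1 := Rmax_l 1 (2 * (Rabs K + 1) / eps)).
  assert (HM2 := Rmax_r 1 (2 * (Rabs K + 1) / eps)).
  split; [split; [apply Rmin_glb_lt; [lra | apply Rdiv_lt_0_compat; lra] | auto]|].
  split; [auto|]. intros a b Ha Hb.
  specialize (HN a ltac:(lra)). specialize (HK b ltac:(lra)).
  assert (Ha' : Rabs (g a - c) <= eps / 2).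
  { eapply Rle_trans; [apply HN|].
    apply Rle_trans with ((Rabs N + 1) * (eps / (2 * (Rabs N + 1)))); [|right; field; lra].
    apply Rle_trans with (Rabs N * a); [apply Rmult_le_compat_r; [lra | apply Rle_abs]|].
    apply Rmult_le_compat; lra. }
  assert (Hb' : Rabs (g b) < eps / 2).
  { eapply Rle_lt_trans; [apply HK|].
    apply (Rmult_lt_reg_r b); [lra|].
    replace (K / b * b) with K by (field; lra).
    assert (2 * (Rabs K + 1) < eps * b).
    { apply (Rmult_lt_reg_r (/ eps)); [apply Rinv_0_lt_compat; lra|].
      replace (eps * b * / eps) with b by (field; lra). unfold Rdiv in HM2. lra. }
    generalize (Rle_abs K). lra. }
  replace (g b - g a + c) with (g b - (g a - c)) by ring.
  eapply Rle_lt_trans; [apply Rabs_triang|]. rewrite Rabs_Ropp. lra.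
Qed.

Definition A1_int_trunc (n : nat) : R :=
  - sum_f_R0 (fun k => (INR k + 1) * A1_prim_lim0 (INR k)) n.

Lemma A1_partial_prim_sub_close n eps : 0 < eps -> exists d M, 0 < d <= 1 /\ 1 <= M /\
  forall a b, 0 < a < d -> M < b ->
    Rabs (A1_partial_prim n b - A1_partial_prim n a - A1_int_trunc n) < eps.
Proof.
  intros He. unfold A1_int_trunc. setoid_rewrite Rminus_def. setoid_rewrite Ropp_involutive.
  apply sub_close_of_rates; auto; unfold A1_partial_prim.
  - apply (lin_conv_at_0_sum (fun k x => (INR k + 1) * A1_prim (INR k) x)).
    intros k. apply lin_conv_at_0_scal, lin_conv_at_0_A1_prim, pos_INR.
  - apply (inv_decay_sum (fun k x => (INR k + 1) * A1_prim (INR k) x)).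
    intros k. apply inv_decay_scal, inv_decay_A1_prim, pos_INR.
Qed.

(** Both truncations are within [2/(n+1)] of the same integral over a large [[a, b]]. *)
Lemma A1_int_trunc_cauchy n m : (1 <= n)%nat -> (n <= m)%nat ->
  Rabs (A1_int_trunc n - A1_int_trunc m) <= 4 / INR n.
Proof.
  intros Hn Hm.
  assert (Hn1 : 1 <= INR n) by (apply (le_INR 1); auto).
  assert (Hnm : INR n <= INR m) by (apply le_INR; auto).
  assert (2 / (INR n + 1) + 2 / (INR m + 1) <= 4 / INR n).
  { assert (2 / (INR n + 1) <= 2 / INR n) by
      (unfold Rdiv; apply Rmult_le_compat_l; [lra | apply Rinv_le_contravar; lra]).
    assert (2 / (INR m + 1) <= 2 / INR n) by
      (unfold Rdiv; apply Rmult_le_compat_l; [lra | apply Rinv_le_contravar; lra]).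
    lra. }
  apply Rle_plus_epsilon. intros e He.
  destruct (A1_partial_prim_sub_close n (e / 2) ltac:(lra)) as [d1 [M1 [Hd1 [HM1 H1]]]].
  destruct (A1_partial_prim_sub_close m (e / 2) ltac:(lra)) as [d2 [M2 [Hd2 [HM2 H2]]]].
  assert (Ha := Rmin_glb_lt d1 d2 0 ltac:(lra) ltac:(lra)).
  assert (Ha1 := Rmin_l d1 d2). assert (Ha2 := Rmin_r d1 d2).
  assert (Hb1 := Rmax_l M1 M2). assert (Hb2 := Rmax_r M1 M2).
  set (a := Rmin d1 d2 / 2) in *. set (b := Rmax M1 M2 + 1) in *.
  specialize (H1 a b ltac:(unfold a; lra) ltac:(unfold b; lra)).
  specialize (H2 a b ltac:(unfold a; lra) ltac:(unfold b; lra)).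
  destruct (RInt_A_integrand_1_bounds n a b ltac:(unfold a; lra) ltac:(unfold a, b; lra)).
  destruct (RInt_A_integrand_1_bounds m a b ltac:(unfold a; lra) ltac:(unfold a, b; lra)).
  apply Rabs_lt_between in H1. apply Rabs_lt_between in H2.
  apply Rabs_le_between. split; lra.
Qed.

Lemma is_RInt_gen_A_integrand_1_of_rate l :
  (forall n, (1 <= n)%nat -> Rabs (A1_int_trunc n - l) <= 4 / INR n) ->
  is_RInt_gen (A_integrand 1) (at_right 0) (Rbar_locally p_infty) l.
Proof.
  intros Hl. unfold is_RInt_gen.
  apply filterlimi_lim_ext_loc with (f := fun ab => RInt (A_integrand 1) (fst ab) (snd ab)).
  - apply Filter_prod with (Q := fun a => 0 < a) (R := fun b => 1 < b).
    + exists (mkposreal 1 ltac:(lra)). intros y _ Hy. exact Hy.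
    + exists 1. auto.
    + intros a b Ha Hb. apply (RInt_correct (V := R_CompleteNormedModule)).
      apply ex_RInt_A_integrand_1; simpl; lra.
  - apply filterlim_locally. intros [e He]. simpl.
    destruct (eventually_div_INR_lt 4 (e / 3) ltac:(lra)) as [N [HN1 HN]].
    specialize (HN N (Nat.le_refl N)). specialize (Hl N HN1).
    assert (HN0 : 1 <= INR N) by (apply (le_INR 1); auto).
    assert (Htail : 2 / (INR N + 1) <= 4 / INR N)
      by (unfold Rdiv; apply Rmult_le_compat; try lra;
          [left; apply Rinv_0_lt_compat; lra | apply Rinv_le_contravar; lra]).
    destruct (A1_partial_prim_sub_close N (e / 3) ltac:(lra)) as [d [M [Hd [HM H]]]].
    apply Filter_prod with (Q := fun a => 0 < a < d) (R := fun b => M < b).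
    + exists (mkposreal d ltac:(lra)). intros y Hy Hy0.
      change (Rabs (y - 0) < d) in Hy. apply Rabs_lt_between in Hy. lra.
    + exists M. auto.
    + intros a b Ha Hb. simpl. specialize (H a b Ha Hb).
      destruct (RInt_A_integrand_1_bounds N a b ltac:(lra) ltac:(lra)).
      change (Rabs (RInt (A_integrand 1) a b - l) < e).
      apply Rabs_lt_between in H. apply Rabs_le_between in Hl.
      apply Rabs_lt_between. split; lra.
Qed.

Lemma harmonic_S n : (1 <= n)%nat -> harmonic (S n) = harmonic n + / INR (S n).
Proof. intros Hn. destruct n as [|n]; [lia|]. unfold harmonic. simpl pred. apply tech5. Qed.

Definition euler_seq (n : nat) : R := harmonic n - ln (INR n).

Lemma euler_seq_sub_bounds n k : (1 <= n)%nat ->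
  0 <= euler_seq n - euler_seq (n + k) <= / INR n - / INR (n + k).
Proof.
  intros Hn. induction k as [|k IH].
  - rewrite Nat.add_0_r. lra.
  - rewrite Nat.add_succ_r. unfold euler_seq in *.
    rewrite harmonic_S by lia. rewrite S_INR in *.
    assert (Hm : 0 < INR (n + k)) by (apply lt_0_INR; lia).
    destruct (ln_succ_sub_bounds (INR (n + k)) Hm). lra.
Qed.

Lemma is_lim_seq_euler_seq : is_lim_seq euler_seq euler_gamma.
Proof.
  destruct (is_lim_seq_of_cauchy_rate euler_seq 1) as [g [Hg _]].
  { intros n m Hn Hnm. replace m with (n + (m - n))%nat by lia.
    destruct (euler_seq_sub_bounds n (m - n) Hn).
    assert (0 < / INR (n + (m - n))) by (apply Rinv_0_lt_compat, lt_0_INR; lia).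
    rewrite Rabs_pos_eq by lra. unfold Rdiv. lra. }
  unfold euler_gamma. fold euler_seq. rewrite (is_lim_seq_unique _ _ Hg). exact Hg.
Qed.

Fixpoint ln_fact (n : nat) : R :=
  match n with O => 0 | S m => ln_fact m + ln (INR (S m)) end.

Lemma A1_int_trunc_eq n : A1_int_trunc n =
  2 * ln_fact n - INR n * (INR n + 3) * ln (INR n + 1) + INR n * (INR n + 1) * ln (INR n + 2)
  + INR n + 2 - harmonic (S (S n)).
Proof.
  induction n as [|n IH].
  - unfold A1_int_trunc, A1_prim_lim0, harmonic. simpl. field.
  - unfold A1_int_trunc in *. rewrite tech5, Ropp_plus_distr, IH, (harmonic_S (S (S n))) by lia.
    unfold A1_prim_lim0. cbn [ln_fact]. rewrite !S_INR.
    assert (0 <= INR n) by apply pos_INR.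
    replace (INR n + 1 + 1) with (INR n + 2) by ring.
    replace (INR n + 1 + 1 + 1) with (INR n + 3) by ring.
    replace (INR n + 1 + 2) with (INR n + 3) by ring.
    replace (INR n + 1 + 3) with (INR n + 4) by ring.
    field. lra.
Qed.

Definition stirling_seq (n : nat) : R := ln_fact n - (INR n + 1 / 2) * ln (INR n) + INR n.
Definition A1_int_trunc_rem (n : nat) : R :=
  2 * INR n * (ln (INR n) - ln (INR n + 1))
  + (INR n * (INR n + 1) * (ln (INR n + 2) - ln (INR n + 1)) - INR n)
  + 2 - / (INR n + 1) - / (INR n + 2).

Lemma A1_int_trunc_decomp n : (1 <= n)%nat ->
  A1_int_trunc n = 2 * stirling_seq n - euler_seq n + A1_int_trunc_rem n.
Proof.
  intros Hn. rewrite A1_int_trunc_eq, !harmonic_S by lia.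
  unfold stirling_seq, euler_seq, A1_int_trunc_rem. rewrite !S_INR.
  assert (0 <= INR n) by apply pos_INR.
  replace (INR n + 1 + 1) with (INR n + 2) by ring. field. lra.
Qed.

Lemma sq_mul_ln_ratio_bounds r : 0 < r ->
  -1 / 2 <= r * (r + 1) * (ln (r + 2) - ln (r + 1)) - r <= -1 / 2 + / (r + 1).
Proof.
  intros Hr. set (t := / (r + 1)).
  assert (Ht : 0 < t) by (apply Rinv_0_lt_compat; lra).
  replace (ln (r + 2) - ln (r + 1)) with (ln (1 + t)).
  2:{ replace (r + 2) with ((r + 1) * (1 + t)) by (unfold t; field; lra).
      rewrite ln_mult by lra. ring. }
  assert (Hrr : 0 <= r * (r + 1)) by nra.
  assert (C1 := Rmult_le_compat_l _ _ _ Hrr (ln_1p_ge t ltac:(lra))).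
  assert (C2 := Rmult_le_compat_l _ _ _ Hrr (ln_1p_le_cubic t ltac:(lra))).
  replace (r * (r + 1) * (t - t ^ 2 / 2)) with (r - / 2 + t / 2) in C1 by (unfold t; field; lra).
  replace (r * (r + 1) * (t - t ^ 2 / 2 + t ^ 3 / 3)) with (r - / 2 + t / 2 + r * t ^ 2 / 3)
    in C2 by (unfold t; field; lra).
  assert (r * t ^ 2 <= t) by (unfold t; apply (Rmult_le_reg_r ((r + 1) ^ 2)); [nra|];
                              field_simplify; lra).
  split; lra.
Qed.

Lemma A1_int_trunc_rem_bound n : (1 <= n)%nat ->
  Rabs (A1_int_trunc_rem n - - (1 / 2)) <= 3 / INR n.
Proof.
  intros Hn. assert (Hr : 1 <= INR n) by (apply (le_INR 1); auto).
  unfold A1_int_trunc_rem. set (r := INR n) in *.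
  destruct (ln_succ_sub_bounds r ltac:(lra)) as [L1 L2].
  destruct (sq_mul_ln_ratio_bounds r ltac:(lra)) as [M1 M2].
  assert (A1 : 2 * r * (ln r - ln (r + 1)) >= -2).
  { assert (r * (ln (r + 1) - ln r) <= r * / r) by (apply Rmult_le_compat_l; lra).
    rewrite Rinv_r in H by lra. lra. }
  assert (A2 : 2 * r * (ln r - ln (r + 1)) <= -2 + 2 / (r + 1)).
  { assert (r * / (r + 1) <= r * (ln (r + 1) - ln r)) by (apply Rmult_le_compat_l; lra).
    replace (r * / (r + 1)) with (1 - / (r + 1)) in H by (field; lra). lra. }
  assert (I1 : 0 < / (r + 1) <= / r)
    by (split; [apply Rinv_0_lt_compat | apply Rinv_le_contravar]; lra).
  assert (I2 : 0 < / (r + 2) <= / r)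
    by (split; [apply Rinv_0_lt_compat | apply Rinv_le_contravar]; lra).
  unfold Rdiv in *. apply Rabs_le_between. split; lra.
Qed.

Lemma is_lim_seq_stirling_seq (l : R) : is_lim_seq A1_int_trunc l ->
  is_lim_seq stirling_seq ((l + euler_gamma + 1 / 2) / 2).
Proof.
  intros Hl.
  assert (Hr : is_lim_seq A1_int_trunc_rem (- (1 / 2)))
    by (apply (is_lim_seq_of_rate _ _ 3), A1_int_trunc_rem_bound).
  assert (H := is_lim_seq_scal_l _ (/ 2) _ (is_lim_seq_minus' _ _ _ _
                 (is_lim_seq_plus' _ _ _ _ Hl is_lim_seq_euler_seq) Hr)).
  replace ((l + euler_gamma + 1 / 2) / 2) with (/ 2 * (l + euler_gamma - - (1 / 2))) by field.
  simpl in H. apply is_lim_seq_ext_loc with (2 := H). exists 1%nat. intros n Hn.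
  rewrite A1_int_trunc_decomp by auto. field.
Qed.

(** * Wallis integrals and Stirling's constant *)

Definition wallis (n : nat) : R := RInt (fun x => sin x ^ n) 0 (PI / 2).

Lemma is_RInt_wallis n : is_RInt (fun x => sin x ^ n) 0 (PI / 2) (wallis n).
Proof.
  apply (RInt_correct (V := R_CompleteNormedModule)).
  apply (ex_RInt_continuous (V := R_CompleteNormedModule)). intros x _.
  apply continuous_of_ex_derive. auto_derive. auto.
Qed.

Lemma wallis_0 : wallis 0 = PI / 2.
Proof.
  unfold wallis. rewrite (RInt_ext _ (fun _ => 1)) by reflexivity.
  rewrite RInt_const. change ((PI / 2 - 0) * 1 = PI / 2). ring.
Qed.

Lemma wallis_1 : wallis 1 = 1.
Proof.
  assert (H : is_RInt (fun x => sin x ^ 1) 0 (PI / 2) (minus (- cos (PI / 2)) (- cos 0))).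
  { apply (is_RInt_derive (V := R_CompleteNormedModule) (fun x => - cos x)).
    - intros x _. auto_derive; auto. ring.
    - intros x _. apply continuous_of_ex_derive. auto_derive. auto. }
  unfold wallis. rewrite (is_RInt_unique _ _ _ _ H), cos_PI2, cos_0.
  change (- 0 - - 1 = 1). ring.
Qed.

(** Integration by parts, in the form
    [(- cos x sin^{n+1} x)' = (n + 2) sin^{n+2} x - (n + 1) sin^n x]. *)
Lemma wallis_rec n : (INR n + 2) * wallis (S (S n)) = (INR n + 1) * wallis n.
Proof.
  set (g := fun x => (INR n + 2) * sin x ^ S (S n) - (INR n + 1) * sin x ^ n).
  assert (H0 : is_RInt g 0 (PI / 2) 0).
  { assert (Hv : minus (- cos (PI / 2) * sin (PI / 2) ^ S n) (- cos 0 * sin 0 ^ S n) = 0)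
      by (rewrite cos_PI2, sin_0; change (- 0 * sin (PI / 2) ^ S n - - cos 0 * 0 ^ S n = 0);
          simpl; ring).
    rewrite <- Hv at 2.
    apply (is_RInt_derive (V := R_CompleteNormedModule) (fun x => - cos x * sin x ^ S n)).
    - intros x _. unfold g. auto_derive; auto.
      change (match n with 0%nat => 1 | S _ => INR n + 1 end) with (INR (S n)). rewrite S_INR.
      assert (Hs := sin2_cos2 x). unfold Rsqr in Hs. cbn [pow].
      ring_simplify. replace (cos x ^ 2) with (1 - sin x ^ 2) by (simpl; lra). ring.
    - intros x _. apply continuous_of_ex_derive. unfold g. auto_derive. auto. }
  assert (H1 := is_RInt_minus _ _ _ _ _ _
                  (is_RInt_scal _ _ _ (INR n + 2) _ (is_RInt_wallis (S (S n))))
                  (is_RInt_scal _ _ _ (INR n + 1) _ (is_RInt_wallis n))).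
  assert (E := eq_trans (eq_sym (is_RInt_unique _ _ _ _ H0)) (is_RInt_unique _ _ _ _ H1)).
  change (0 = (INR n + 2) * wallis (S (S n)) - (INR n + 1) * wallis n) in E. lra.
Qed.

Lemma sin_bounds_0_PI2 x : 0 <= x <= PI / 2 -> 0 <= sin x <= 1.
Proof. intros Hx. split; [apply sin_ge_0; generalize PI_RGT_0; lra | apply SIN_bound]. Qed.

Lemma wallis_succ_le n : wallis (S n) <= wallis n.
Proof.
  assert (Hp : 0 <= PI / 2) by (generalize PI_RGT_0; lra).
  apply (is_RInt_le _ _ _ _ _ _ Hp (is_RInt_wallis (S n)) (is_RInt_wallis n)).
  intros x Hx. destruct (sin_bounds_0_PI2 x ltac:(lra)). cbn [pow].
  assert (0 <= sin x ^ n) by (apply pow_le; auto). nra.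
Qed.

Lemma wallis_nonneg n : 0 <= wallis n.
Proof.
  assert (Hp : 0 <= PI / 2) by (generalize PI_RGT_0; lra).
  replace 0 with (scal (PI / 2 - 0) 0) by (change ((PI / 2 - 0) * 0 = 0); ring).
  apply (is_RInt_le _ _ _ _ _ _ Hp (is_RInt_const 0 (PI / 2) 0) (is_RInt_wallis n)).
  intros x Hx. apply pow_le, sin_bounds_0_PI2. lra.
Qed.

Lemma wallis_mul_succ n : (INR n + 1) * wallis (S n) * wallis n = PI / 2.
Proof.
  induction n as [|n IH].
  - rewrite wallis_0, wallis_1. simpl. ring.
  - rewrite S_INR, <- IH.
    replace ((INR n + 1 + 1) * wallis (S (S n))) with ((INR n + 2) * wallis (S (S n))) by ring.
    rewrite wallis_rec. ring.
Qed.

Lemma wallis_pos n : 0 < wallis n.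
Proof.
  destruct (wallis_nonneg n) as [H| H]; auto.
  assert (E := wallis_mul_succ n). rewrite <- H, Rmult_0_r in E. generalize PI_RGT_0. lra.
Qed.

Lemma ln_wallis_even n :
  ln (wallis (2 * n)) = ln (PI / 2) + ln_fact (2 * n) - 2 * ln_fact n - 2 * INR n * ln 2.
Proof.
  induction n as [|n IH].
  - simpl. rewrite wallis_0. ring.
  - replace (2 * S n)%nat with (S (S (2 * n))) by lia.
    assert (HN := pos_INR n). assert (Hw := wallis_pos (2 * n)).
    assert (Hrec := wallis_rec (2 * n)). rewrite mult_INR in Hrec. simpl INR in Hrec.
    replace (wallis (S (S (2 * n)))) with (wallis (2 * n) * (2 * INR n + 1) / (2 * (INR n + 1)))
      by (apply (Rmult_eq_reg_l ((1 + 1) * INR n + 2)); [rewrite Hrec; field|]; lra).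
    cbn [ln_fact]. rewrite !S_INR, mult_INR. simpl INR.
    rewrite ln_div, ln_mult, IH, (ln_mult 2 (INR n + 1)) by nra.
    replace ((1 + 1) * INR n + 1 + 1) with (2 * (INR n + 1)) by ring.
    replace ((1 + 1) * INR n + 1) with (2 * INR n + 1) by ring.
    rewrite (ln_mult 2 (INR n + 1)) by lra. ring.
Qed.

(** Wallis: [W(2n+1) <= W(2n)] and [W(2n+2) <= W(2n+1)], combined with
    [(2n+1) W(2n+1) W(2n) = pi/2], squeeze [n W(2n)^2] to [pi/4]. *)
Lemma is_lim_seq_wallis_even_sq : is_lim_seq (fun n => INR n * wallis (2 * n) ^ 2) (PI / 4).
Proof.
  apply (is_lim_seq_of_rate _ _ PI). intros n Hn.
  assert (Hr : 1 <= INR n) by (apply (le_INR 1); auto). assert (HP := PI_RGT_0).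
  assert (I := wallis_mul_succ (2 * n)).
  assert (R := wallis_rec (2 * n)).
  assert (D1 := wallis_succ_le (2 * n)). assert (D2 := wallis_succ_le (S (2 * n))).
  assert (Hw := wallis_pos (S (2 * n))). assert (Hc := wallis_pos (2 * n)).
  rewrite mult_INR in I, R. simpl INR in I, R.
  replace ((1 + 1) * INR n) with (2 * INR n) in I, R by ring.
  set (c := wallis (2 * n)) in *. set (w := wallis (S (2 * n))) in *.
  set (c' := wallis (S (S (2 * n)))) in *.
  assert (Lo : PI / 2 <= (2 * INR n + 1) * c ^ 2) by (rewrite <- I; simpl; nra).
  assert (Hi : (2 * INR n + 1) * c ^ 2 <= PI / 2 * (2 * INR n + 2) / (2 * INR n + 1)).
  { apply (Rmult_le_reg_l (2 * INR n + 1)); [lra|].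
    replace ((2 * INR n + 1) * (PI / 2 * (2 * INR n + 2) / (2 * INR n + 1)))
      with ((2 * INR n + 1) * c * ((2 * INR n + 2) * w)) by (rewrite <- I; field; lra).
    replace ((2 * INR n + 1) * ((2 * INR n + 1) * c ^ 2))
      with ((2 * INR n + 1) * c * ((2 * INR n + 2) * c')) by (rewrite R; ring).
    apply Rmult_le_compat_l; [nra|]. apply Rmult_le_compat_l; lra. }
  replace (INR n * c ^ 2) with (INR n / (2 * INR n + 1) * ((2 * INR n + 1) * c ^ 2))
    by (field; lra).
  assert (Hq : 0 <= INR n / (2 * INR n + 1)) by (apply Rdiv_le_0_compat; lra).
  assert (A := Rmult_le_compat_l _ _ _ Hq Lo). assert (B := Rmult_le_compat_l _ _ _ Hq Hi).
  replace (INR n / (2 * INR n + 1) * (PI / 2)) with (PI / 4 - PI / (4 * (2 * INR n + 1))) in A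
    by (field; lra).
  replace (INR n / (2 * INR n + 1) * (PI / 2 * (2 * INR n + 2) / (2 * INR n + 1)))
    with (PI / 4 - PI / (4 * (2 * INR n + 1) ^ 2)) in B by (field; lra).
  assert (0 <= PI / (4 * (2 * INR n + 1) ^ 2)) by (apply Rdiv_le_0_compat; nra).
  assert (PI / (4 * (2 * INR n + 1)) <= PI / INR n)
    by (unfold Rdiv; apply Rmult_le_compat_l; [lra | apply Rinv_le_contravar; lra]).
  apply Rabs_le_between. split; lra.
Qed.

Lemma stirling_seq_double_sub n : (1 <= n)%nat ->
  stirling_seq (2 * n) - 2 * stirling_seq n
  = / 2 * (ln (INR n * wallis (2 * n) ^ 2) - 2 * ln (PI / 2) - ln 2).
Proof.
  intros Hn. assert (Hr : 1 <= INR n) by (apply (le_INR 1); auto).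
  assert (Hw := wallis_pos (2 * n)).
  assert (Hfact : ln_fact (2 * n) = ln (wallis (2 * n)) - ln (PI / 2) + 2 * ln_fact n
                                    + 2 * INR n * ln 2) by (rewrite ln_wallis_even; ring).
  unfold stirling_seq. rewrite Hfact, mult_INR. replace (INR 2) with 2 by (simpl; lra).
  replace (wallis (2 * n) ^ 2) with (wallis (2 * n) * wallis (2 * n)) by ring.
  rewrite !ln_mult by nra. field.
Qed.

Lemma is_lim_seq_ln (u : nat -> R) (l : R) : 0 < l -> is_lim_seq u l ->
  is_lim_seq (fun n => ln (u n)) (ln l).
Proof.
  intros Hl. apply is_lim_seq_continuous.
  apply continuity_pt_filterlim, continuous_of_ex_derive. auto_derive. lra.
Qed.

Lemma is_lim_seq_stirling_seq_double_sub :
  is_lim_seq (fun n => stirling_seq (2 * n) - 2 * stirling_seq n) (- ln (2 * PI) / 2).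
Proof.
  assert (HP := PI_RGT_0).
  assert (H := is_lim_seq_scal_l _ (/ 2) _ (is_lim_seq_plus' _ _ _ _
    (is_lim_seq_ln _ (PI / 4) ltac:(lra) is_lim_seq_wallis_even_sq)
    (is_lim_seq_const (- 2 * ln (PI / 2) - ln 2)))).
  simpl in H.
  replace (- ln (2 * PI) / 2) with (/ 2 * (ln (PI / 4) + (- 2 * ln (PI / 2) - ln 2))).
  - apply is_lim_seq_ext_loc with (2 := H). exists 1%nat. intros n Hn.
    rewrite stirling_seq_double_sub by auto. simpl. ring.
  - replace 4 with (2 * 2) by ring.
    rewrite !ln_div, !ln_mult by lra. field.
Qed.

Lemma is_lim_seq_A1_int_trunc_value (l : R) : is_lim_seq A1_int_trunc l -> l = 2 * C_const - 1 / 2.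
Proof.
  intros Hl. assert (Hs := is_lim_seq_stirling_seq l Hl).
  set (sigma := (l + euler_gamma + 1 / 2) / 2) in Hs.
  assert (Hs2 : is_lim_seq (fun n => stirling_seq (2 * n)) sigma).
  { apply (is_lim_seq_subseq stirling_seq sigma (fun n => (2 * n)%nat)); auto.
    intros P [N HN]. exists N. intros n Hn. apply HN. lia. }
  assert (H := is_lim_seq_minus' _ _ _ _ Hs2 (is_lim_seq_scal_l _ 2 _ Hs)). cbv beta in H.
  assert (E := is_lim_seq_unique _ _ H).
  rewrite (is_lim_seq_unique _ _ is_lim_seq_stirling_seq_double_sub) in E.
  simpl in E. injection E. unfold C_const, sigma. lra.
Qed.

Theorem mainTheorem20 :
  is_RInt_gen (A_integrand 1)
    (at_right 0) (Rbar_locally p_infty) (2 * C_const - 1 / 2)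
  /\ (forall x, A_integrand 1 x = (/ x - / (exp x - 1)) ^ 2).
Proof.
  split; [|exact A_integrand_1].
  destruct (is_lim_seq_of_cauchy_rate A1_int_trunc 4 A1_int_trunc_cauchy) as [l [Hl Hrate]].
  rewrite <- (is_lim_seq_A1_int_trunc_value l Hl).
  exact (is_RInt_gen_A_integrand_1_of_rate l Hrate).
Qed.
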